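(* Let $\mathbb{T}$ be a time scale unbounded from above, $t_0\in\mathbb{T}$, $b,c:\mathbb{T}\to[0,\infty)$ with $c-b\in\mathcal{R}^+$, $x_0>0$, $y_0>0$, $z_0\ge0$, $N=x_0+y_0+z_0$. Assume there is $M>0$ with $b(t)\le M(c-b)(t)$ for all $t\in\mathbb{T}$, and $\int_{t_0}^{\infty}(c-b)(\tau)\,\Delta\tau=\infty$. Then every solution $(x,y,z)$ of $$x^{\Delta}=-\frac{b(t)\,x\,y^{\sigma}}{x+y},\qquad y^{\Delta}=\frac{b(t)\,x\,y^{\sigma}}{x+y}-c(t)\,y^{\sigma},\qquad z^{\Delta}=c(t)\,y^{\sigma},$$ with $x,y:\mathbb{T}\to(0,\infty)$, $z:\mathbb{T}\to[0,\infty)$, $x(t_0)=x_0$, $y(t_0)=y_0$, $z(t_0)=z_0$, converges as $t\to\infty$ to $(\alpha,0,N-\alpha)$ for some $\alpha\in(0,N)$.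
   Context: A time scale $\mathbb{T}$ is a nonempty closed subset of $\mathbb{R}$. $\sigma(t)=\inf\{s\in\mathbb{T}:s>t\}$, $\mu(t)=\sigma(t)-t$, $f^{\sigma}=f\circ\sigma$. $f^{\Delta}$ is the delta (Hilger) derivative: for every $\varepsilon>0$ there is $\delta>0$ with $|f(\sigma(t))-f(s)-f^{\Delta}(t)(\sigma(t)-s)|\le\varepsilon|\sigma(t)-s|$ for $s\in(t-\delta,t+\delta)\cap\mathbb{T}$. $\int\cdot\,\Delta\tau$ is the delta integral on $\mathbb{T}$. $p\in\mathcal{R}^+$ means $p$ is rd-continuous (continuous at right-dense points, finite left limits at left-dense points) and $1+\mu(t)p(t)>0$ for all $t\in\mathbb{T}$. *)

From Stdlib Require Import Reals.
From Coquelicot Require Import Coquelicot.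
Open Scope R_scope.

Definition closed_set (TS : R -> Prop) : Prop :=
  forall x, (forall eps, 0 < eps -> exists s, TS s /\ Rabs (s - x) < eps) -> TS x.

Definition time_scale (TS : R -> Prop) : Prop :=
  (exists t, TS t) /\ closed_set TS.

Definition unbounded_above (TS : R -> Prop) : Prop :=
  forall K, exists t, TS t /\ K < t.

(* forward jump operator sigma(t) = inf {s in T : s > t}
   (finite whenever T is unbounded above) *)
Definition fjump (TS : R -> Prop) (t : R) : R :=
  real (Glb_Rbar (fun s => TS s /\ t < s)).

Definition mu (TS : R -> Prop) (t : R) : R := fjump TS t - t.

Definition has_delta_deriv (TS : R -> Prop) (f : R -> R) (t D : R) : Prop :=
  forall eps, 0 < eps -> exists delta, 0 < delta /\
    forall s, TS s -> Rabs (s - t) < delta ->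
      Rabs (f (fjump TS t) - f s - D * (fjump TS t - s))
        <= eps * Rabs (fjump TS t - s).

Definition right_dense (TS : R -> Prop) (t : R) : Prop := fjump TS t = t.

Definition left_dense (TS : R -> Prop) (t : R) : Prop :=
  forall eps, 0 < eps -> exists s, TS s /\ t - eps < s /\ s < t.

Definition rd_continuous (TS : R -> Prop) (p : R -> R) : Prop :=
  forall t, TS t ->
    (right_dense TS t ->
       forall eps, 0 < eps -> exists delta, 0 < delta /\
         forall s, TS s -> Rabs (s - t) < delta -> Rabs (p s - p t) < eps) /\
    (left_dense TS t ->
       exists L, forall eps, 0 < eps -> exists delta, 0 < delta /\
         forall s, TS s -> t - delta < s -> s < t -> Rabs (p s - L) < eps).

Definition pos_regressive (TS : R -> Prop) (p : R -> R) : Prop :=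
  rd_continuous TS p /\ forall t, TS t -> 0 < 1 + mu TS t * p t.

(* \int_{t0}^{oo} f(tau) Delta tau = +oo, via the Cauchy delta integral:
   \int_{t0}^{t} f Delta tau = F t - F t0 for an antiderivative F
   (F^Delta = f on T), and the improper integral diverges to +oo. *)
Definition delta_integral_infinite (TS : R -> Prop) (f : R -> R) (t0 : R) : Prop :=
  exists F : R -> R,
    (forall t, TS t -> has_delta_deriv TS F t (f t)) /\
    forall K, exists T1, forall t, TS t -> T1 <= t -> K <= F t - F t0.

Definition conv_at_infty (TS : R -> Prop) (f : R -> R) (l : R) : Prop :=
  forall eps, 0 < eps -> exists T1, forall t, TS t -> T1 <= t -> Rabs (f t - l) < eps.

From Stdlib Require Import Reals Lra Classical.
From Coquelicot Require Import Coquelicot.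
Open Scope R_scope.

(* Total mass [x + y + z] is conserved and [x] is nonincreasing, so [x] tends
   to its infimum [alpha] and [z] to [N - alpha] as soon as [y -> 0].  With [F]
   an antiderivative of [c - b], the inequality [y^Delta <= - (c - b) y^sigma]
   makes [(1 + F t - F t0) y t] nonincreasing, and [F -> oo] forces [y -> 0].
   Positivity of [alpha] comes from the Lyapunov function
   [ln x - th ln (x + y)], where [th = M / (1 + M)] turns the hypothesis into
   [b <= th c]: its delta derivative [y (th c - b) / (x + y)] is nonnegative at
   right-dense points and, by concavity of [ln], it does not decrease across
   jumps; hence [(1 - th) ln x] stays bounded below.  Monotonicity along the
   time scale is derived from the induction principle for time scales. *)

Lemma eq0_of_Rabs_le_eps_mult a c :
  0 <= c -> (forall eps, 0 < eps -> Rabs a <= eps * c) -> a = 0.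
Proof.
  intros Hc Hle. destruct (Req_dec a 0) as [|Ha]; [assumption|exfalso].
  pose proof (Rabs_pos_lt a Ha) as Hpos.
  assert (Hlt : Rabs a / (c + 1) * c < Rabs a / (c + 1) * (c + 1)).
  { apply Rmult_lt_compat_l; [apply Rdiv_lt_0_compat|]; lra. }
  replace (Rabs a / (c + 1) * (c + 1)) with (Rabs a) in Hlt by (field; lra).
  pose proof (Hle (Rabs a / (c + 1)) ltac:(apply Rdiv_lt_0_compat; lra)). lra.
Qed.

Lemma sup_approx (A : R -> Prop) a ub :
  A a -> (forall r, A r -> r <= ub) ->
  exists m, (forall r, A r -> r <= m) /\
            (forall e, 0 < e -> exists r, A r /\ m - e < r).
Proof.
  intros Ha Hub.
  destruct (completeness A) as [m [Hm Hleast]]; [exists ub; exact Hub | now exists a |].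
  exists m. split; [exact Hm|]. intros e He.
  apply NNPP. intros Hnone.
  assert (m <= m - e); [|lra].
  apply Hleast. intros r Hr. apply Rnot_lt_le. intros Hlt. apply Hnone. now exists r.
Qed.

Lemma inf_approx (A : R -> Prop) a lb :
  A a -> (forall r, A r -> lb <= r) ->
  exists m, (forall r, A r -> m <= r) /\
            (forall e, 0 < e -> exists r, A r /\ r < m + e).
Proof.
  intros Ha Hlb.
  destruct (sup_approx (fun r => A (- r)) (- a) (- lb)) as [m [Hm Happ]].
  - now rewrite Ropp_involutive.
  - intros r Hr. specialize (Hlb _ Hr). lra.
  - exists (- m). split.
    + intros r Hr. assert (- r <= m) by (apply Hm; now rewrite Ropp_involutive). lra.
    + intros e He. destruct (Happ e He) as [r [Hr Hlt]]. exists (- r). split; [exact Hr|lra].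
Qed.

Section ForwardJump.

Variable TS : R -> Prop.
Hypothesis Hunb : unbounded_above TS.

Lemma fjump_glb t :
  (forall s, TS s -> t < s -> fjump TS t <= s) /\
  (forall g, (forall s, TS s -> t < s -> g <= s) -> g <= fjump TS t).
Proof.
  unfold fjump.
  destruct (Glb_Rbar_correct (fun s => TS s /\ t < s)) as [Hlb Hglb].
  destruct (Hunb t) as [s0 [Hs0 Hts0]].
  assert (Ht : Rbar_le t (Glb_Rbar (fun s => TS s /\ t < s))).
  { apply Hglb. intros s [_ Hs]. simpl. lra. }
  pose proof (Hlb s0 (conj Hs0 Hts0)) as Hs.
  destruct (Glb_Rbar (fun s => TS s /\ t < s)) as [g| |]; simpl in *; try contradiction.
  split.
  - intros s HTs Hts. exact (Hlb s (conj HTs Hts)).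
  - intros g' Hg'. apply (Hglb (Finite g')). intros s [H1 H2]. simpl. auto.
Qed.

Lemma fjump_le t s : TS s -> t < s -> fjump TS t <= s.
Proof. apply fjump_glb. Qed.

Lemma fjump_ge_lb t g : (forall s, TS s -> t < s -> g <= s) -> g <= fjump TS t.
Proof. apply fjump_glb. Qed.

Lemma fjump_ge t : t <= fjump TS t.
Proof. apply fjump_ge_lb. intros; lra. Qed.

Lemma fjump_in : time_scale TS -> forall t, TS (fjump TS t).
Proof.
  intros [_ Hcl] t. apply Hcl. intros eps Heps. apply NNPP. intros Hfar.
  assert (fjump TS t + eps <= fjump TS t); [|lra].
  apply fjump_ge_lb. intros s Hs Hts. apply Rnot_lt_le. intros Hlt. apply Hfar.
  exists s. split; [exact Hs|]. pose proof (fjump_le t s Hs Hts).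
  rewrite Rabs_right; lra.
Qed.

End ForwardJump.

Definition near (TS : R -> Prop) (t : R) (P : R -> Prop) : Prop :=
  exists delta, 0 < delta /\ forall s, TS s -> Rabs (s - t) < delta -> P s.

Definition cont_at (TS : R -> Prop) (f : R -> R) (t : R) : Prop :=
  forall eps, 0 < eps -> near TS t (fun s => Rabs (f s - f t) < eps).

Definition little_o_jump (TS : R -> Prop) (t : R) (E : R -> R) : Prop :=
  forall eps, 0 < eps ->
    near TS t (fun s => Rabs (E s) <= eps * Rabs (fjump TS t - s)).

Section Near.

Variables (TS : R -> Prop) (t : R).

Lemma near_close r : 0 < r -> near TS t (fun s => Rabs (s - t) < r).
Proof. intros Hr. exists r. auto. Qed.

Lemma near_and (P Q : R -> Prop) :
  near TS t P -> near TS t Q -> near TS t (fun s => P s /\ Q s).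
Proof.
  intros [d1 [Hd1 HP]] [d2 [Hd2 HQ]]. exists (Rmin d1 d2).
  split; [now apply Rmin_pos|]. intros s Hs Hst. split.
  - apply HP; [exact Hs|]. eapply Rlt_le_trans; [exact Hst|apply Rmin_l].
  - apply HQ; [exact Hs|]. eapply Rlt_le_trans; [exact Hst|apply Rmin_r].
Qed.

Lemma near_impl (P Q : R -> Prop) :
  (forall s, TS s -> P s -> Q s) -> near TS t P -> near TS t Q.
Proof. intros HPQ [d [Hd HP]]. exists d. split; [exact Hd|]. auto. Qed.

Lemma cont_at_bounded f :
  cont_at TS f t -> near TS t (fun s => Rabs (f s) <= Rabs (f t) + 1).
Proof.
  intros Hf. apply (near_impl (fun s => Rabs (f s - f t) < 1)); [|apply Hf; lra].
  intros s _ Hs. pose proof (Rabs_triang_inv (f s) (f t)). lra.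
Qed.

Lemma little_o_ext (E1 E2 : R -> R) :
  (forall s, E1 s = E2 s) -> little_o_jump TS t E1 -> little_o_jump TS t E2.
Proof.
  intros HE H1 eps Heps.
  apply (near_impl (fun s => Rabs (E1 s) <= eps * Rabs (fjump TS t - s))).
  - intros s _. now rewrite HE.
  - now apply H1.
Qed.

Lemma little_o_plus (E1 E2 : R -> R) :
  little_o_jump TS t E1 -> little_o_jump TS t E2 ->
  little_o_jump TS t (fun s => E1 s + E2 s).
Proof.
  intros H1 H2 eps Heps.
  apply (near_impl (fun s => Rabs (E1 s) <= eps / 2 * Rabs (fjump TS t - s) /\
                             Rabs (E2 s) <= eps / 2 * Rabs (fjump TS t - s))).
  - intros s _ [Hs1 Hs2]. eapply Rle_trans; [apply Rabs_triang|]. lra.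
  - apply near_and; [apply H1|apply H2]; lra.
Qed.

Lemma little_o_mult_bounded (B E : R -> R) K :
  near TS t (fun s => Rabs (B s) <= K) -> little_o_jump TS t E ->
  little_o_jump TS t (fun s => B s * E s).
Proof.
  intros HB HE eps Heps.
  pose proof (Rabs_pos K) as HK.
  set (e := eps / (Rabs K + 1)).
  assert (He : 0 < e) by (apply Rdiv_lt_0_compat; lra).
  apply (near_impl (fun s => Rabs (B s) <= K /\
                             Rabs (E s) <= e * Rabs (fjump TS t - s))).
  - intros s _ [HBs HEs]. rewrite Rabs_mult.
    apply Rle_trans with ((Rabs K + 1) * (e * Rabs (fjump TS t - s))).
    + apply Rmult_le_compat; try apply Rabs_pos; [|exact HEs].
      pose proof (Rle_abs K). lra.
    + right. unfold e. field. lra.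
  - apply near_and; [exact HB|apply HE, He].
Qed.

Lemma little_o_scal k (E : R -> R) :
  little_o_jump TS t E -> little_o_jump TS t (fun s => k * E s).
Proof.
  apply (little_o_mult_bounded (fun _ => k) E (Rabs k)).
  exists 1. split; [lra|]. intros. apply Rle_refl.
Qed.

Lemma little_o_vanishing (B : R -> R) :
  (forall eps, 0 < eps -> near TS t (fun s => Rabs (B s) <= eps)) ->
  little_o_jump TS t (fun s => B s * (fjump TS t - s)).
Proof.
  intros HB eps Heps. apply (near_impl (fun s => Rabs (B s) <= eps)); [|now apply HB].
  intros s _ Hs. rewrite Rabs_mult. apply Rmult_le_compat_r; [apply Rabs_pos|exact Hs].
Qed.

End Near.

Lemma derivable_pt_lim_error phi w l :
  derivable_pt_lim phi w l -> forall eta, 0 < eta ->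
  exists delta, 0 < delta /\ forall v, Rabs (v - w) < delta ->
    Rabs (phi v - phi w - l * (v - w)) <= eta * Rabs (v - w).
Proof.
  intros Hphi eta Heta. destruct (Hphi eta Heta) as [d Hd].
  exists d. split; [apply cond_pos|]. intros v Hv.
  destruct (Req_dec v w) as [->|Hne].
  { rewrite !Rminus_diag, Rmult_0_r, Rminus_0_r, Rabs_R0. lra. }
  specialize (Hd (v - w) ltac:(lra) Hv). replace (w + (v - w)) with v in Hd by ring.
  replace (phi v - phi w - l * (v - w))
    with ((v - w) * ((phi v - phi w) / (v - w) - l)) by (field; lra).
  rewrite Rabs_mult, Rmult_comm. apply Rmult_le_compat_r; [apply Rabs_pos|lra].
Qed.

Lemma cont_at_comp TS phi l f t :
  derivable_pt_lim phi (f t) l -> cont_at TS f t -> cont_at TS (fun s => phi (f s)) t.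
Proof.
  intros Hphi Hf eps Heps.
  destruct (derivable_pt_lim_error _ _ _ Hphi 1 Rlt_0_1) as [d [Hd Hlin]].
  pose proof (Rabs_pos l) as Hl.
  assert (Hr : 0 < Rmin d (eps / (Rabs l + 1)))
    by (apply Rmin_pos; [exact Hd|apply Rdiv_lt_0_compat; lra]).
  apply (near_impl _ _ (fun s => Rabs (f s - f t) < Rmin d (eps / (Rabs l + 1))));
    [|now apply Hf].
  intros s _ Hs.
  assert (Hsd : Rabs (f s - f t) < d) by (eapply Rlt_le_trans; [exact Hs|apply Rmin_l]).
  assert (Hse : (Rabs l + 1) * Rabs (f s - f t) < eps).
  { apply Rlt_le_trans with ((Rabs l + 1) * (eps / (Rabs l + 1))).
    - apply Rmult_lt_compat_l; [lra|]. eapply Rlt_le_trans; [exact Hs|apply Rmin_r].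
    - right. field. lra. }
  specialize (Hlin _ Hsd).
  replace (phi (f s) - phi (f t))
    with (l * (f s - f t) + (phi (f s) - phi (f t) - l * (f s - f t))) by ring.
  eapply Rle_lt_trans; [apply Rabs_triang|]. rewrite Rabs_mult. lra.
Qed.

Lemma cont_at_plus TS f g t :
  cont_at TS f t -> cont_at TS g t -> cont_at TS (fun s => f s + g s) t.
Proof.
  intros Hf Hg eps Heps.
  apply (near_impl _ t (fun s => Rabs (f s - f t) < eps / 2 /\ Rabs (g s - g t) < eps / 2)).
  - intros s _ [Hfs Hgs].
    replace (f s + g s - (f t + g t)) with ((f s - f t) + (g s - g t)) by ring.
    eapply Rle_lt_trans; [apply Rabs_triang|]. lra.
  - apply near_and; [apply Hf|apply Hg]; lra.
Qed.

Lemma cont_at_scal TS k f t : cont_at TS f t -> cont_at TS (fun s => k * f s) t.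
Proof.
  intros Hf eps Heps. pose proof (Rabs_pos k) as Hk.
  apply (near_impl _ t (fun s => Rabs (f s - f t) < eps / (Rabs k + 1)));
    [|apply Hf, Rdiv_lt_0_compat; lra].
  intros s _ Hs. rewrite <- Rmult_minus_distr_l, Rabs_mult.
  apply Rle_lt_trans with ((Rabs k + 1) * Rabs (f s - f t)).
  - apply Rmult_le_compat_r; [apply Rabs_pos|lra].
  - apply Rmult_lt_reg_r with (/ (Rabs k + 1)); [apply Rinv_0_lt_compat; lra|].
    replace ((Rabs k + 1) * Rabs (f s - f t) * / (Rabs k + 1)) with (Rabs (f s - f t))
      by (field; lra). exact Hs.
Qed.

Lemma cont_at_ext TS f g t :
  (forall s, f s = g s) -> cont_at TS f t -> cont_at TS g t.
Proof.
  intros Hfg Hf eps Heps. apply (near_impl _ t (fun s => Rabs (f s - f t) < eps)).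
  - intros s _. now rewrite !Hfg.
  - now apply Hf.
Qed.

Section DeltaDerivative.

Variable TS : R -> Prop.
Hypothesis Hunb : unbounded_above TS.

Lemma delta_deriv_error f t D :
  has_delta_deriv TS f t D <->
  little_o_jump TS t (fun s => f (fjump TS t) - f s - D * (fjump TS t - s)).
Proof. reflexivity. Qed.

Lemma delta_deriv_jump f t D :
  TS t -> has_delta_deriv TS f t D -> f (fjump TS t) = f t + mu TS t * D.
Proof.
  intros Ht Hd. unfold mu.
  enough (f (fjump TS t) - f t - D * (fjump TS t - t) = 0) by lra.
  apply (eq0_of_Rabs_le_eps_mult _ (Rabs (fjump TS t - t))); [apply Rabs_pos|].
  intros eps Heps. destruct (Hd eps Heps) as [d [Hd0 Hd1]].
  apply Hd1; [exact Ht|]. now rewrite Rminus_diag, Rabs_R0.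
Qed.

Lemma delta_deriv_lipschitz f t D :
  has_delta_deriv TS f t D ->
  near TS t (fun s => Rabs (f (fjump TS t) - f s) <= (Rabs D + 1) * Rabs (fjump TS t - s)).
Proof.
  intros Hd.
  apply (near_impl _ _ (fun s => Rabs (f (fjump TS t) - f s - D * (fjump TS t - s))
                                 <= 1 * Rabs (fjump TS t - s))); [|apply Hd; lra].
  intros s _ Hs.
  replace (f (fjump TS t) - f s)
    with (D * (fjump TS t - s) + (f (fjump TS t) - f s - D * (fjump TS t - s))) by ring.
  eapply Rle_trans; [apply Rabs_triang|]. rewrite Rabs_mult. lra.
Qed.

Lemma delta_deriv_cont f t D : TS t -> has_delta_deriv TS f t D -> cont_at TS f t.
Proof.
  intros Ht Hd eps Heps.
  pose proof (delta_deriv_jump f t D Ht Hd) as Hjump. unfold mu in Hjump.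
  pose proof (fjump_ge TS Hunb t) as Hge. pose proof (Rabs_pos D) as HD.
  set (m := fjump TS t - t) in *.
  assert (Hm : 0 <= m) by (unfold m; lra).
  assert (He : 0 < eps / (2 * (m + 1))) by (apply Rdiv_lt_0_compat; lra).
  assert (Hr : 0 < Rmin 1 (eps / (2 * (Rabs D + 1))))
    by (apply Rmin_pos; [lra|apply Rdiv_lt_0_compat; lra]).
  refine (near_impl _ _ _ _ _ (near_and _ _ _ _ (Hd _ He) (near_close TS t _ Hr))).
  intros s _ [HE Hst].
  assert (Hst1 : Rabs (s - t) < 1) by (eapply Rlt_le_trans; [exact Hst|apply Rmin_l]).
  assert (HstD : Rabs D * Rabs (s - t) < eps / 2).
  { apply Rle_lt_trans with (Rabs D * (eps / (2 * (Rabs D + 1)))).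
    - apply Rmult_le_compat_l; [lra|]. left. eapply Rlt_le_trans; [exact Hst|apply Rmin_r].
    - apply Rmult_lt_reg_r with (2 * (Rabs D + 1)); [lra|].
      field_simplify; lra. }
  assert (Hgap : Rabs (fjump TS t - s) <= m + 1).
  { replace (fjump TS t - s) with (m - (s - t)) by (unfold m; ring).
    eapply Rle_trans; [apply Rabs_triang|]. rewrite Rabs_Ropp, Rabs_right; lra. }
  assert (HEm : eps / (2 * (m + 1)) * Rabs (fjump TS t - s) <= eps / 2).
  { apply Rle_trans with (eps / (2 * (m + 1)) * (m + 1)).
    - apply Rmult_le_compat_l; lra.
    - right. field. lra. }
  replace (f s - f t)
    with (D * (s - t) - (f (fjump TS t) - f s - D * (fjump TS t - s)))
    by (rewrite Hjump; unfold m; ring).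
  unfold Rminus at 1. eapply Rle_lt_trans; [apply Rabs_triang|].
  rewrite Rabs_Ropp, Rabs_mult. lra.
Qed.

Lemma has_delta_deriv_ext f g t D :
  (forall s, f s = g s) -> has_delta_deriv TS f t D -> has_delta_deriv TS g t D.
Proof.
  intros Hfg Hf. apply (proj2 (delta_deriv_error _ _ _)).
  apply (little_o_ext _ _ (fun s => f (fjump TS t) - f s - D * (fjump TS t - s))).
  - intros s. now rewrite !Hfg.
  - exact Hf.
Qed.

Lemma delta_deriv_const k t : has_delta_deriv TS (fun _ => k) t 0.
Proof.
  intros eps Heps. exists 1. split; [lra|]. intros s _ _.
  replace (k - k - 0 * (fjump TS t - s)) with 0 by ring. rewrite Rabs_R0.
  apply Rmult_le_pos; [lra|apply Rabs_pos].
Qed.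

Lemma delta_deriv_plus f g t Df Dg :
  has_delta_deriv TS f t Df -> has_delta_deriv TS g t Dg ->
  has_delta_deriv TS (fun s => f s + g s) t (Df + Dg).
Proof.
  intros Hf Hg. apply (proj2 (delta_deriv_error _ _ _)).
  apply (little_o_ext _ _ (fun s => (f (fjump TS t) - f s - Df * (fjump TS t - s))
                                  + (g (fjump TS t) - g s - Dg * (fjump TS t - s)))).
  - intros s. ring.
  - now apply little_o_plus.
Qed.

Lemma delta_deriv_scal k f t Df :
  has_delta_deriv TS f t Df -> has_delta_deriv TS (fun s => k * f s) t (k * Df).
Proof.
  intros Hf. apply (proj2 (delta_deriv_error _ _ _)).
  apply (little_o_ext _ _ (fun s => k * (f (fjump TS t) - f s - Df * (fjump TS t - s)))).
  - intros s. ring.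
  - now apply little_o_scal.
Qed.

Lemma delta_deriv_mult f g t Df Dg :
  TS t -> has_delta_deriv TS f t Df -> has_delta_deriv TS g t Dg ->
  has_delta_deriv TS (fun s => f s * g s) t (Df * g (fjump TS t) + f t * Dg).
Proof.
  intros Ht Hf Hg. apply (proj2 (delta_deriv_error _ _ _)).
  pose proof (delta_deriv_cont f t Df Ht Hf) as Hfc.
  apply (little_o_ext _ _
    (fun s => g (fjump TS t) * (f (fjump TS t) - f s - Df * (fjump TS t - s))
            + f s * (g (fjump TS t) - g s - Dg * (fjump TS t - s))
            + (f s - f t) * Dg * (fjump TS t - s))); [intros s; ring|].
  apply little_o_plus; [apply little_o_plus|].
  - now apply little_o_scal.
  - apply (little_o_mult_bounded _ _ _ _ (Rabs (f t) + 1)); [|exact Hg].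
    now apply cont_at_bounded.
  - apply little_o_vanishing. intros eps Heps. pose proof (Rabs_pos Dg) as HDg.
    apply (near_impl _ _ (fun s => Rabs (f s - f t) < eps / (Rabs Dg + 1)));
      [|apply Hfc, Rdiv_lt_0_compat; lra].
    intros s _ Hs. rewrite Rabs_mult.
    apply Rle_trans with (eps / (Rabs Dg + 1) * (Rabs Dg + 1)).
    + apply Rmult_le_compat; try apply Rabs_pos; lra.
    + right. field. lra.
Qed.

(* Only at right-dense points: at a right-scattered [t] the delta derivative of
   [phi \o f] is a difference quotient, not [phi' (f t) * D]. *)
Lemma delta_deriv_comp_rd phi l f t D :
  TS t -> fjump TS t = t -> derivable_pt_lim phi (f t) l ->
  has_delta_deriv TS f t D -> has_delta_deriv TS (fun s => phi (f s)) t (l * D).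
Proof.
  intros Ht Hrd Hphi Hf.
  pose proof (delta_deriv_cont f t D Ht Hf) as Hfc.
  pose proof (delta_deriv_lipschitz f t D Hf) as Hlip.
  apply (proj1 (delta_deriv_error _ _ _)) in Hf.
  apply (proj2 (delta_deriv_error _ _ _)).
  rewrite Hrd in Hf, Hlip |- *.
  apply (little_o_ext _ _ (fun s => -1 * (phi (f s) - phi (f t) - l * (f s - f t))
                                  + l * (f t - f s - D * (t - s)))); [intros s; ring|].
  apply little_o_plus; apply little_o_scal; [|exact Hf].
  intros eps Heps. rewrite Hrd. pose proof (Rabs_pos D) as HD.
  destruct (derivable_pt_lim_error _ _ _ Hphi (eps / (Rabs D + 1))) as [d [Hd Hlin]];
    [apply Rdiv_lt_0_compat; lra|].
  refine (near_impl _ _ _ _ _ (near_and _ _ _ _ (Hfc d Hd) Hlip)).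
  intros s _ [Hs Hs']. eapply Rle_trans; [now apply Hlin|].
  rewrite Rabs_minus_sym in Hs'.
  apply Rle_trans with (eps / (Rabs D + 1) * ((Rabs D + 1) * Rabs (t - s))).
  - apply Rmult_le_compat_l; [apply Rlt_le, Rdiv_lt_0_compat; lra|exact Hs'].
  - right. field. lra.
Qed.

End DeltaDerivative.

Definition right_dini_nonneg (TS : R -> Prop) (G : R -> R) (t : R) : Prop :=
  forall eps, 0 < eps -> exists delta, 0 < delta /\
    forall s, TS s -> t < s < t + delta -> G t - eps * (s - t) <= G s.

Lemma delta_deriv_right_dini TS G t D :
  has_delta_deriv TS G t D -> 0 <= D -> fjump TS t = t -> right_dini_nonneg TS G t.
Proof.
  intros Hd HD Hrd eps Heps. destruct (Hd eps Heps) as [d [Hd0 Hd1]].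
  exists d. split; [exact Hd0|]. intros s Hs [Hts Hsd].
  specialize (Hd1 s Hs ltac:(rewrite Rabs_right; lra)). rewrite Hrd in Hd1.
  rewrite (Rabs_left1 (t - s)) in Hd1 by lra.
  pose proof (Rle_abs (G t - G s - D * (t - s))).
  assert (0 <= D * (s - t)) by (apply Rmult_le_pos; lra). nra.
Qed.

Section Induction.

Variables (TS : R -> Prop) (t0 : R).
Hypotheses (HT : time_scale TS) (Hunb : unbounded_above TS) (Ht0 : TS t0).

Lemma left_scattered_pred t :
  TS t -> t0 < t -> ~ left_dense TS t ->
  exists r, TS r /\ t0 <= r < t /\ fjump TS r = t.
Proof.
  intros Ht Ht0t Hscat.
  destruct (not_all_ex_not _ _ Hscat) as [eps Hgap].
  apply imply_to_and in Hgap. destruct Hgap as [Heps Hgap].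
  destruct (sup_approx (fun r => TS r /\ t0 <= r < t) t0 t) as [rho [Hub Happ]].
  { split; [exact Ht0|lra]. }
  { intros r [_ Hr]. lra. }
  assert (Hbelow : forall r, TS r -> t0 <= r < t -> r <= t - eps).
  { intros r Hr Hrt. apply Rnot_lt_le. intros Hlt. apply Hgap.
    exists r. split; [exact Hr|lra]. }
  assert (Hrho : t0 <= rho <= t - eps).
  { split; [apply Hub; split; [exact Ht0|lra]|].
    apply Rnot_lt_le. intros Hlt.
    destruct (Happ (rho - (t - eps))) as [r [[Hr Hrt] Hr']]; [lra|].
    specialize (Hbelow r Hr Hrt). lra. }
  assert (HTrho : TS rho).
  { destruct HT as [_ Hcl]. apply Hcl. intros e He.
    destruct (Happ e He) as [r [[Hr Hrt] Hr']]. exists r. split; [exact Hr|].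
    pose proof (Hub r (conj Hr Hrt)). rewrite Rabs_left1; lra. }
  exists rho. split; [exact HTrho|]. split; [lra|].
  apply Rle_antisym.
  - apply (fjump_le TS Hunb); [exact Ht|lra].
  - apply (fjump_ge_lb TS Hunb). intros s Hs Hrs. apply Rnot_lt_le. intros Hst.
    assert (s <= rho) by (apply Hub; split; [exact Hs|lra]). lra.
Qed.

Lemma time_scale_induction (S : R -> Prop) :
  S t0 ->
  (forall t, TS t -> t0 <= t -> t < fjump TS t -> S t -> S (fjump TS t)) ->
  (forall t, TS t -> t0 <= t -> fjump TS t = t -> S t ->
     exists delta, 0 < delta /\ forall s, TS s -> t < s < t + delta -> S s) ->
  (forall t, TS t -> t0 < t -> left_dense TS t ->
     (forall s, TS s -> t0 <= s < t -> S s) -> S t) ->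
  forall t, TS t -> t0 <= t -> S t.
Proof.
  intros Hinit Hrs Hrd Hld t1 Ht1 Ht01. apply NNPP. intros Hbad.
  destruct (inf_approx (fun r => TS r /\ t0 <= r /\ ~ S r) t1 t0) as [tau [Hlb Happ]].
  { split; [exact Ht1|split; [exact Ht01|exact Hbad]]. }
  { intros r [_ [Hr _]]. exact Hr. }
  assert (Hstart : t0 <= tau).
  { apply Rnot_lt_le. intros Hlt.
    destruct (Happ (t0 - tau)) as [r [[_ [Hr _]] Hr']]; lra. }
  assert (HTtau : TS tau).
  { destruct HT as [_ Hcl]. apply Hcl. intros e He.
    destruct (Happ e He) as [r [Hr Hr']]. exists r. split; [apply Hr|].
    pose proof (Hlb r Hr). rewrite Rabs_right; lra. }
  assert (Hgood : forall r, TS r -> t0 <= r < tau -> S r).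
  { intros r Hr Hrt. apply NNPP. intros HSr.
    pose proof (Hlb r (conj Hr (conj (proj1 Hrt) HSr))). lra. }
  assert (HStau : S tau).
  { destruct (Req_dec tau t0) as [->|Hne]; [exact Hinit|].
    destruct (classic (left_dense TS tau)) as [Hdense|Hscat].
    - apply Hld; [exact HTtau|lra|exact Hdense|exact Hgood].
    - destruct (left_scattered_pred tau HTtau ltac:(lra) Hscat) as [r [Hr [Hrt Hj]]].
      rewrite <- Hj. apply Hrs; [exact Hr|lra|lra|apply Hgood; [exact Hr|lra]]. }
  assert (Hnext : forall e, 0 < e -> exists r, TS r /\ ~ S r /\ tau < r < tau + e).
  { intros e He. destruct (Happ e He) as [r [Hr Hr']].
    pose proof (Hlb r Hr) as Hle. destruct Hr as [Hr [_ HSr]].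
    exists r. repeat split; [exact Hr|exact HSr| |exact Hr'].
    destruct Hle as [Hlt| ->]; [exact Hlt|contradiction]. }
  assert (Hdense : fjump TS tau = tau).
  { apply Rle_antisym; [|apply (fjump_ge TS Hunb)].
    apply Rnot_lt_le. intros Hlt.
    destruct (Hnext (fjump TS tau - tau)) as [r [Hr [_ [Hr1 Hr2]]]]; [lra|].
    pose proof (fjump_le TS Hunb tau r Hr Hr1). lra. }
  destruct (Hrd tau HTtau Hstart Hdense HStau) as [d [Hd HS]].
  destruct (Hnext d Hd) as [r [Hr [HSr Hrange]]].
  exact (HSr (HS r Hr Hrange)).
Qed.

Lemma nondecreasing_criterion G :
  (forall t, TS t -> t0 <= t -> cont_at TS G t) ->
  (forall t, TS t -> t0 <= t -> t < fjump TS t -> G t <= G (fjump TS t)) ->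
  (forall t, TS t -> t0 <= t -> fjump TS t = t -> right_dini_nonneg TS G t) ->
  forall t, TS t -> t0 <= t -> G t0 <= G t.
Proof.
  intros Hcont Hjump Hdini t Ht Ht0t. apply Rle_plus_epsilon. intros e He.
  set (eps := e / (t - t0 + 1)).
  assert (Heps : 0 < eps) by (apply Rdiv_lt_0_compat; lra).
  enough (Hslope : forall r, TS r -> t0 <= r -> G t0 - eps * (r - t0) <= G r).
  { specialize (Hslope t Ht Ht0t).
    assert (eps * (t - t0) <= eps * (t - t0 + 1)) by (apply Rmult_le_compat_l; lra).
    replace (eps * (t - t0 + 1)) with e in * by (unfold eps; field; lra). lra. }
  apply (time_scale_induction (fun r => G t0 - eps * (r - t0) <= G r)).
  - lra.
  - intros r Hr Hr0 Hrs HS. pose proof (Hjump r Hr Hr0 Hrs).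
    assert (eps * (r - t0) <= eps * (fjump TS r - t0)) by (apply Rmult_le_compat_l; lra).
    lra.
  - intros r Hr Hr0 Hrd HS. destruct (Hdini r Hr Hr0 Hrd eps Heps) as [d [Hd HG]].
    exists d. split; [exact Hd|]. intros s Hs Hsr. specialize (HG s Hs Hsr). lra.
  - intros r Hr Hr0 Hdense Hbefore. apply Rle_plus_epsilon. intros eta Heta.
    destruct (Hcont r Hr (Rlt_le _ _ Hr0) eta Heta) as [d [Hd Hnear]].
    destruct (Hdense (Rmin d (r - t0))) as [s [Hs [Hs1 Hs2]]]; [apply Rmin_pos; lra|].
    pose proof (Rmin_l d (r - t0)). pose proof (Rmin_r d (r - t0)).
    specialize (Hbefore s Hs ltac:(lra)).
    specialize (Hnear s Hs ltac:(rewrite Rabs_left; lra)).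
    apply Rabs_def2 in Hnear.
    assert (eps * (s - t0) <= eps * (r - t0)) by (apply Rmult_le_compat_l; lra). lra.
Qed.

Lemma delta_deriv_nonneg_nondecreasing G DG :
  (forall t, TS t -> t0 <= t -> has_delta_deriv TS G t (DG t)) ->
  (forall t, TS t -> t0 <= t -> 0 <= DG t) ->
  forall t, TS t -> t0 <= t -> G t0 <= G t.
Proof.
  intros Hd Hpos. apply nondecreasing_criterion.
  - intros t Ht Ht0t. exact (delta_deriv_cont TS Hunb G t (DG t) Ht (Hd t Ht Ht0t)).
  - intros t Ht Ht0t _. rewrite (delta_deriv_jump TS G t (DG t) Ht (Hd t Ht Ht0t)).
    unfold mu. pose proof (fjump_ge TS Hunb t). pose proof (Hpos t Ht Ht0t).
    assert (0 <= (fjump TS t - t) * DG t) by (apply Rmult_le_pos; lra). lra.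
  - intros t Ht Ht0t Hrd. exact (delta_deriv_right_dini TS G t _ (Hd t Ht Ht0t) (Hpos t Ht Ht0t) Hrd).
Qed.

Lemma delta_deriv_nonpos_nonincreasing G DG :
  (forall t, TS t -> t0 <= t -> has_delta_deriv TS G t (DG t)) ->
  (forall t, TS t -> t0 <= t -> DG t <= 0) ->
  forall t, TS t -> t0 <= t -> G t <= G t0.
Proof.
  intros Hd Hneg t Ht Ht0t.
  enough (-1 * G t0 <= -1 * G t) by lra.
  apply (delta_deriv_nonneg_nondecreasing (fun s => -1 * G s) (fun s => -1 * DG s));
    [| |exact Ht|exact Ht0t].
  - intros s Hs Hs0. now apply delta_deriv_scal, Hd.
  - intros s Hs Hs0. specialize (Hneg s Hs Hs0). lra.
Qed.

End Induction.

Lemma ln_le_sub_1 v : 0 < v -> ln v <= v - 1.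
Proof. intros Hv. pose proof (exp_ineq1_le (ln v)) as H. rewrite exp_ln in H; lra. Qed.

(* Concavity of [ln] on the segment [[1, v]]. *)
Lemma weighted_ln_le th v w :
  0 < v -> 0 <= th <= 1 -> 1 - th + th * v <= w -> th * ln v <= ln w.
Proof.
  intros Hv Hth Hw.
  set (m := 1 - th + th * v).
  assert (Hm : 0 < m).
  { unfold m. destruct (Req_dec th 1) as [->|Hne]; [lra|].
    assert (0 <= th * v) by (apply Rmult_le_pos; lra). lra. }
  pose proof (ln_le_sub_1 (v / m) ltac:(apply Rdiv_lt_0_compat; lra)) as Hvm.
  pose proof (ln_le_sub_1 (/ m) ltac:(apply Rinv_0_lt_compat; lra)) as Hm1.
  rewrite ln_div in Hvm by lra. rewrite ln_Rinv in Hm1 by lra.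
  assert (Hmix : th * (v / m - 1) + (1 - th) * (/ m - 1) = 0) by (unfold m in *; field; lra).
  assert (th * (ln v - ln m) <= th * (v / m - 1)) by (apply Rmult_le_compat_l; lra).
  assert ((1 - th) * - ln m <= (1 - th) * (/ m - 1)) by (apply Rmult_le_compat_l; lra).
  pose proof (ln_le m w Hm Hw). lra.
Qed.

Lemma frac_pos_lt_1 M : 0 < M -> 0 <= M / (1 + M) < 1.
Proof.
  intros HM. split; [apply Rdiv_le_0_compat; lra|].
  apply Rmult_lt_reg_r with (1 + M); [lra|]. field_simplify; lra.
Qed.

Lemma le_frac_mul_of_le_mul_sub M b c :
  0 < M -> b <= M * (c - b) -> b <= M / (1 + M) * c.
Proof.
  intros HM Hb. apply Rmult_le_reg_r with (1 + M); [lra|].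
  replace (M / (1 + M) * c * (1 + M)) with (M * c) by (field; lra). lra.
Qed.

Lemma nonincreasing_conv_at_infty TS t0 f m :
  TS t0 ->
  (forall s t, TS s -> TS t -> t0 <= s <= t -> f t <= f s) ->
  (forall t, TS t -> t0 <= t -> m <= f t) ->
  exists l, m <= l <= f t0 /\ conv_at_infty TS f l.
Proof.
  intros Ht0 Hdec Hlb.
  destruct (inf_approx (fun v => exists t, TS t /\ t0 <= t /\ v = f t) (f t0) m)
    as [l [Hl Happ]].
  { exists t0. split; [exact Ht0|split; [lra|reflexivity]]. }
  { intros v [t [Ht [Ht0t ->]]]. now apply Hlb. }
  exists l. split; [split|].
  - apply Rnot_lt_le. intros Hlt.
    destruct (Happ (m - l)) as [v [[t [Ht [Ht0t ->]]] Hv]]; [lra|].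
    specialize (Hlb t Ht Ht0t). lra.
  - apply Hl. exists t0. split; [exact Ht0|split; [lra|reflexivity]].
  - intros eps Heps. destruct (Happ eps Heps) as [v [[t1 [Ht1 [Ht01 ->]]] Hv]].
    exists t1. intros t Ht Ht1t.
    assert (f t <= f t1) by (apply Hdec; [exact Ht1|exact Ht|lra]).
    assert (l <= f t) by (apply Hl; exists t; split; [exact Ht|split; [lra|reflexivity]]).
    rewrite Rabs_right; lra.
Qed.

Lemma conv_at_infty_complement TS t0 f g h N lf lg :
  (forall t, TS t -> t0 <= t -> h t = N - (f t + g t)) ->
  conv_at_infty TS f lf -> conv_at_infty TS g lg ->
  conv_at_infty TS h (N - (lf + lg)).
Proof.
  intros Hh Hf Hg eps Heps.
  destruct (Hf (eps / 2)) as [T1 H1]; [lra|].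
  destruct (Hg (eps / 2)) as [T2 H2]; [lra|].
  exists (Rmax t0 (Rmax T1 T2)). intros t Ht Htt.
  pose proof (Rmax_l t0 (Rmax T1 T2)). pose proof (Rmax_r t0 (Rmax T1 T2)).
  pose proof (Rmax_l T1 T2). pose proof (Rmax_r T1 T2).
  specialize (H1 t Ht ltac:(lra)). specialize (H2 t Ht ltac:(lra)).
  rewrite Hh by (exact Ht || lra).
  replace (N - (f t + g t) - (N - (lf + lg))) with (- ((f t - lf) + (g t - lg))) by ring.
  rewrite Rabs_Ropp. eapply Rle_lt_trans; [apply Rabs_triang|]. lra.
Qed.

Section SIR.

Variables (TS : R -> Prop) (b c x y z : R -> R).
Hypotheses (HT : time_scale TS) (Hunb : unbounded_above TS).
Hypotheses (Hb : forall t, TS t -> 0 <= b t) (Hcb : forall t, TS t -> 0 <= c t - b t).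
Hypotheses (Hx : forall t, TS t -> 0 < x t) (Hy : forall t, TS t -> 0 < y t).
Hypothesis Hdx : forall t, TS t ->
  has_delta_deriv TS x t (- (b t * x t * y (fjump TS t)) / (x t + y t)).
Hypothesis Hdy : forall t, TS t ->
  has_delta_deriv TS y t
    ((b t * x t * y (fjump TS t)) / (x t + y t) - c t * y (fjump TS t)).
Hypothesis Hdz : forall t, TS t -> has_delta_deriv TS z t (c t * y (fjump TS t)).

Lemma sir_incidence_bounds t :
  TS t -> 0 <= b t * x t * y (fjump TS t) / (x t + y t) <= b t * y (fjump TS t).
Proof.
  intros Ht. pose proof (Hx t Ht). pose proof (Hy t Ht). pose proof (Hb t Ht).
  pose proof (Hy _ (fjump_in TS Hunb HT t)).
  assert (HbY : 0 <= b t * y (fjump TS t)) by (apply Rmult_le_pos; lra).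
  replace (b t * x t * y (fjump TS t) / (x t + y t))
    with (b t * y (fjump TS t) - b t * y (fjump TS t) * (y t / (x t + y t)))
    by (field; lra).
  assert (0 <= b t * y (fjump TS t) * (y t / (x t + y t)) <= b t * y (fjump TS t)).
  { split; [apply Rmult_le_pos; [lra|apply Rdiv_le_0_compat; lra]|].
    rewrite <- (Rmult_1_r (b t * y (fjump TS t))) at 2.
    apply Rmult_le_compat_l; [lra|].
    apply Rmult_le_reg_r with (x t + y t); [lra|].
    unfold Rdiv. rewrite Rmult_assoc, Rinv_l; lra. }
  lra.
Qed.

Lemma sir_x_nonincreasing s t : TS s -> TS t -> s <= t -> x t <= x s.
Proof.
  intros Hs Ht Hst.
  apply (delta_deriv_nonpos_nonincreasing TS s HT Hunb Hs x
           (fun r => - (b r * x r * y (fjump TS r)) / (x r + y r)));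
    [intros r Hr _; exact (Hdx r Hr)| |exact Ht|exact Hst].
  intros r Hr _. rewrite Rdiv_opp_l. pose proof (sir_incidence_bounds r Hr). lra.
Qed.

Lemma sir_total_constant s t :
  TS s -> TS t -> s <= t -> x t + y t + z t = x s + y s + z s.
Proof.
  intros Hs Ht Hst.
  assert (Hd : forall r, TS r -> s <= r -> has_delta_deriv TS (fun q => x q + y q + z q) r 0).
  { intros r Hr _. pose proof (Hx r Hr). pose proof (Hy r Hr).
    replace 0 with (- (b r * x r * y (fjump TS r)) / (x r + y r)
                    + ((b r * x r * y (fjump TS r)) / (x r + y r) - c r * y (fjump TS r))
                    + c r * y (fjump TS r)) by (field; lra).
    apply delta_deriv_plus; [apply delta_deriv_plus|]; auto. }
  pose proof (delta_deriv_nonneg_nondecreasing TS s HT Hunb Hs _ (fun _ => 0) Hd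
                (fun _ _ _ => Rle_refl 0) t Ht Hst).
  pose proof (delta_deriv_nonpos_nonincreasing TS s HT Hunb Hs _ (fun _ => 0) Hd
                (fun _ _ _ => Rle_refl 0) t Ht Hst).
  lra.
Qed.

Lemma sir_y_bound t0 F :
  TS t0 -> (forall t, TS t -> has_delta_deriv TS F t (c t - b t)) ->
  forall t, TS t -> t0 <= t -> (1 + F t - F t0) * y t <= y t0.
Proof.
  intros Ht0 HF.
  pose proof (delta_deriv_nonneg_nondecreasing TS t0 HT Hunb Ht0 F (fun t => c t - b t)
                (fun t Ht _ => HF t Ht) (fun t Ht _ => Hcb t Ht)) as HFmono.
  assert (HW : forall t, TS t -> has_delta_deriv TS (fun s => 1 + F s - F t0) t (c t - b t)).
  { intros t Ht. apply (has_delta_deriv_ext TS (fun s => F s + (1 - F t0))); [intros s; ring|].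
    rewrite <- (Rplus_0_r (c t - b t)).
    apply delta_deriv_plus; [exact (HF t Ht)|apply delta_deriv_const]. }
  intros t Ht Ht0t.
  replace (y t0) with ((1 + F t0 - F t0) * y t0) by ring.
  apply (delta_deriv_nonpos_nonincreasing TS t0 HT Hunb Ht0 (fun s => (1 + F s - F t0) * y s)
    (fun r => (c r - b r) * y (fjump TS r) + (1 + F r - F t0) *
       ((b r * x r * y (fjump TS r)) / (x r + y r) - c r * y (fjump TS r))));
    [| |exact Ht|exact Ht0t].
  - intros r Hr _.
    exact (delta_deriv_mult TS Hunb (fun s => 1 + F s - F t0) y r _ _ Hr (HW r Hr) (Hdy r Hr)).
  - intros r Hr Hr0. pose proof (HFmono r Hr Hr0). pose proof (Hcb r Hr).
    pose proof (sir_incidence_bounds r Hr).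
    pose proof (Hy _ (fjump_in TS Hunb HT r)).
    set (Y := y (fjump TS r)) in *.
    set (I := b r * x r * Y / (x r + y r)) in *.
    assert ((1 + F r - F t0) * (I - c r * Y) <= (1 + F r - F t0) * (b r * Y - c r * Y))
      by (apply Rmult_le_compat_l; lra).
    assert (0 <= (F r - F t0) * ((c r - b r) * Y))
      by (apply Rmult_le_pos; [lra|apply Rmult_le_pos; lra]).
    nra.
Qed.

Section Lyapunov.

Variable th : R.
Hypotheses (Hth : 0 <= th < 1) (Hbth : forall t, TS t -> b t <= th * c t).

Let G s := ln (x s) - th * ln (x s + y s).

Lemma sir_lyapunov_jump t : TS t -> G t <= G (fjump TS t).
Proof.
  intros Ht.
  pose proof (fjump_ge TS Hunb t) as Hge.
  pose proof (fjump_in TS Hunb HT t) as Hsg.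
  pose proof (delta_deriv_jump TS x t _ Ht (Hdx t Ht)) as Hxs.
  pose proof (delta_deriv_jump TS _ t _ Ht (delta_deriv_plus TS x y t _ _ (Hdx t Ht) (Hdy t Ht)))
    as Hus.
  cbv beta in Hus. unfold mu in Hxs, Hus.
  pose proof (Hx t Ht). pose proof (Hy t Ht). pose proof (Hx _ Hsg). pose proof (Hy _ Hsg).
  pose proof (Hbth t Ht).
  pose (w := x (fjump TS t) / x t).
  pose (v := (x (fjump TS t) + y (fjump TS t)) / (x t + y t)).
  assert (Hstep : 1 - th + th * v <= w).
  { assert (Hgap : w - (1 - th + th * v)
                   = (fjump TS t - t) * y (fjump TS t) * (th * c t - b t) / (x t + y t)).
    { unfold w, v. rewrite Hus, Hxs. field. lra. }
    enough (0 <= (fjump TS t - t) * y (fjump TS t) * (th * c t - b t) / (x t + y t)) by lra.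
    apply Rdiv_le_0_compat; [|lra].
    apply Rmult_le_pos; [apply Rmult_le_pos|]; lra. }
  pose proof (weighted_ln_le th v w ltac:(unfold v; apply Rdiv_lt_0_compat; lra)
                ltac:(lra) Hstep) as Hln.
  unfold w, v in Hln. rewrite !ln_div in Hln by lra.
  unfold G. lra.
Qed.

Lemma sir_lyapunov_deriv_rd t :
  TS t -> fjump TS t = t ->
  has_delta_deriv TS G t (y t * (th * c t - b t) / (x t + y t)).
Proof.
  intros Ht Hrd. pose proof (Hx t Ht). pose proof (Hy t Ht).
  apply (has_delta_deriv_ext TS (fun s => ln (x s) + - th * ln (x s + y s)));
    [intros s; unfold G; ring|].
  replace (y t * (th * c t - b t) / (x t + y t))
    with (/ x t * (- (b t * x t * y (fjump TS t)) / (x t + y t))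
          + - th * (/ (x t + y t) *
              (- (b t * x t * y (fjump TS t)) / (x t + y t)
               + ((b t * x t * y (fjump TS t)) / (x t + y t) - c t * y (fjump TS t)))))
    by (rewrite Hrd; field; lra).
  apply delta_deriv_plus; [|apply delta_deriv_scal].
  - apply (delta_deriv_comp_rd TS Hunb ln (/ x t) x t); auto.
    apply derivable_pt_lim_ln. auto.
  - apply (delta_deriv_comp_rd TS Hunb ln (/ (x t + y t)) (fun s => x s + y s) t); auto.
    + apply derivable_pt_lim_ln. lra.
    + apply delta_deriv_plus; auto.
Qed.

Lemma sir_lyapunov_cont t : TS t -> cont_at TS G t.
Proof.
  intros Ht. pose proof (Hx t Ht). pose proof (Hy t Ht).
  pose proof (delta_deriv_cont TS Hunb x t _ Ht (Hdx t Ht)) as Hxc.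
  pose proof (delta_deriv_cont TS Hunb y t _ Ht (Hdy t Ht)) as Hyc.
  apply (cont_at_ext TS (fun s => ln (x s) + - th * ln (x s + y s)));
    [intros s; unfold G; ring|].
  apply cont_at_plus; [|apply cont_at_scal].
  - apply (cont_at_comp TS ln (/ x t)); [apply derivable_pt_lim_ln; lra|exact Hxc].
  - apply (cont_at_comp TS ln (/ (x t + y t)) (fun s => x s + y s));
      [apply derivable_pt_lim_ln; lra|now apply cont_at_plus].
Qed.

Lemma sir_lyapunov_nondecreasing t0 :
  TS t0 -> forall t, TS t -> t0 <= t -> G t0 <= G t.
Proof.
  intros Ht0. apply (nondecreasing_criterion TS t0 HT Hunb Ht0).
  - intros t Ht _. now apply sir_lyapunov_cont.
  - intros t Ht _ _. now apply sir_lyapunov_jump.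
  - intros t Ht _ Hrd.
    apply (delta_deriv_right_dini TS G t _ (sir_lyapunov_deriv_rd t Ht Hrd)); [|exact Hrd].
    pose proof (Hx t Ht). pose proof (Hy t Ht). pose proof (Hbth t Ht).
    apply Rdiv_le_0_compat; [apply Rmult_le_pos|]; lra.
Qed.

Lemma sir_x_bounded_below t0 :
  TS t0 -> exists m, 0 < m /\ forall t, TS t -> t0 <= t -> m <= x t.
Proof.
  intros Ht0. exists (exp (G t0 / (1 - th))). split; [apply exp_pos|].
  intros t Ht Ht0t. pose proof (Hx t Ht). pose proof (Hy t Ht).
  pose proof (sir_lyapunov_nondecreasing t0 Ht0 t Ht Ht0t) as HG.
  assert (Hlnx : G t0 <= (1 - th) * ln (x t)).
  { pose proof (ln_le (x t) (x t + y t) ltac:(lra) ltac:(lra)).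
    assert (th * ln (x t) <= th * ln (x t + y t)) by (apply Rmult_le_compat_l; lra).
    unfold G in HG |- *. lra. }
  assert (Hbound : G t0 / (1 - th) <= ln (x t)).
  { apply Rmult_le_reg_l with (1 - th); [lra|].
    replace ((1 - th) * (G t0 / (1 - th))) with (G t0) by (field; lra). exact Hlnx. }
  apply Rnot_lt_le. intros Hlt.
  apply ln_increasing in Hlt; [|exact H].
  rewrite ln_exp in Hlt. lra.
Qed.

End Lyapunov.

Lemma sir_y_conv t0 :
  TS t0 -> delta_integral_infinite TS (fun t => c t - b t) t0 -> conv_at_infty TS y 0.
Proof.
  intros Ht0 [F [HF HFinf]] eps Heps.
  destruct (HFinf (y t0 / eps)) as [T1 HT1].
  exists (Rmax T1 t0). intros t Ht Htt.
  pose proof (Rmax_l T1 t0). pose proof (Rmax_r T1 t0).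
  specialize (HT1 t Ht ltac:(lra)).
  pose proof (sir_y_bound t0 F Ht0 HF t Ht ltac:(lra)) as Hbound.
  pose proof (Hy t Ht). pose proof (Hy t0 Ht0).
  rewrite Rminus_0_r, Rabs_right by lra.
  assert (Hgrow : y t * (1 + y t0 / eps) <= y t0).
  { eapply Rle_trans; [|exact Hbound]. rewrite (Rmult_comm (1 + F t - F t0)).
    apply Rmult_le_compat_l; lra. }
  replace (y t * (1 + y t0 / eps)) with (y t * (eps + y t0) / eps) in Hgrow by (field; lra).
  apply Rmult_le_compat_r with (r := eps) in Hgrow; [|lra].
  replace (y t * (eps + y t0) / eps * eps) with (y t * (eps + y t0)) in Hgrow by (field; lra).
  nra.
Qed.

End SIR.

Theorem theorem26
  (TS : R -> Prop) (t0 : R) (b c : R -> R) (x0 y0 z0 : R)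
  (x y z : R -> R) :
  time_scale TS -> unbounded_above TS -> TS t0 ->
  (forall t, TS t -> 0 <= b t) -> (forall t, TS t -> 0 <= c t) ->
  pos_regressive TS (fun t => c t - b t) ->
  0 < x0 -> 0 < y0 -> 0 <= z0 ->
  (exists M, 0 < M /\ forall t, TS t -> b t <= M * (c t - b t)) ->
  delta_integral_infinite TS (fun t => c t - b t) t0 ->
  (forall t, TS t -> 0 < x t /\ 0 < y t /\ 0 <= z t) ->
  (forall t, TS t ->
     has_delta_deriv TS x t (- (b t * x t * y (fjump TS t)) / (x t + y t))) ->
  (forall t, TS t ->
     has_delta_deriv TS y t
       ((b t * x t * y (fjump TS t)) / (x t + y t) - c t * y (fjump TS t))) ->
  (forall t, TS t -> has_delta_deriv TS z t (c t * y (fjump TS t))) ->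
  x t0 = x0 -> y t0 = y0 -> z t0 = z0 ->
  exists alpha, 0 < alpha < x0 + y0 + z0 /\
    conv_at_infty TS x alpha /\ conv_at_infty TS y 0 /\
    conv_at_infty TS z (x0 + y0 + z0 - alpha).
Proof.
  intros HT Hunb Ht0 Hb _ _ Hx0 Hy0 Hz0 [M [HM HbM]] Hint Hpos Hdx Hdy Hdz Ex Ey Ez.
  assert (Hx : forall t, TS t -> 0 < x t) by (intros t Ht; apply Hpos, Ht).
  assert (Hy : forall t, TS t -> 0 < y t) by (intros t Ht; apply Hpos, Ht).
  assert (Hcb : forall t, TS t -> 0 <= c t - b t).
  { intros t Ht. specialize (HbM t Ht). specialize (Hb t Ht). nra. }
  assert (Hbth : forall t, TS t -> b t <= M / (1 + M) * c t)
    by (intros t Ht; now apply le_frac_mul_of_le_mul_sub, HbM).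
  destruct (sir_x_bounded_below TS b c x y HT Hunb Hx Hy Hdx Hdy _
              (frac_pos_lt_1 M HM) Hbth t0 Ht0) as [m [Hm Hmx]].
  destruct (nonincreasing_conv_at_infty TS t0 x m Ht0
              (fun s t Hs Ht Hst => sir_x_nonincreasing TS b x y HT Hunb Hb Hx Hy Hdx
                                      s t Hs Ht (proj2 Hst)) Hmx)
    as [alpha [[Hmalpha Halpha] Hxconv]].
  pose proof (sir_y_conv TS b c x y HT Hunb Hb Hcb Hx Hy Hdy t0 Ht0 Hint) as Hyconv.
  exists alpha. split; [rewrite Ex in Halpha; lra|].
  split; [exact Hxconv|]. split; [exact Hyconv|].
  replace (x0 + y0 + z0 - alpha) with (x0 + y0 + z0 - (alpha + 0)) by ring.
  apply (conv_at_infty_complement TS t0 x y z); [|exact Hxconv|exact Hyconv].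
  intros t Ht Ht0t.
  rewrite <- Ex, <- Ey, <- Ez,
    <- (sir_total_constant TS b c x y z HT Hunb Hx Hy Hdx Hdy Hdz t0 t Ht0 Ht Ht0t).
  ring.
Qed.
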